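(* Fix $K\ge 1$ classes, and for each class $k\in\{1,\dots,K\}$ a decomposable stratified graph $G_L^k$ on the feature set $\Delta$, with its clique and separator factor structures as described in the context. Fix a test data set $\mathbf{X}^T$ of $n$ observations and a labeling $T\in\{1,\dots,K\}^n$ of the test data. Let the training data grow, and suppose that for every class $k$, every clique $C\in\mathcal{C}(G_L^k)$ and every separator $S\in\mathcal{S}(G_L^k)$, and every index triple $(j,i,l)$ of the corresponding factor, the training count $m(x_j^i\mid\pi_j^l)$ computed from $\mathbf{X}^{R,k}$ tends to $\infty$ (so that every updated hyperparameter $\beta_{jil}=\alpha_{jil}+m(x_j^i\mid \pi_j^l)\to\infty$). This holds, for example, almost surely when the training data of each class are an i.i.d. sample of size tending to infinity from a distribution under which all these cells have strictly positive probability. Then \[ \log P_{\mathrm{sim}}(T\mid \mathbf{X}^T,\mathbf{X}^R,R,G_L^A)-\log P_{\mathrm{mar}}(T\mid \mathbf{X}^T,\mathbf{X}^R,R,G_L^A)\longrightarrow 0 . \] That is, the marginal and simultaneous predictive SGM classifiers are asymptotically equivalent as the size of the training data goes to infinity.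
   Context: All features $X_\delta$, $\delta\in\Delta$, are binary (more generally finite categorical, variable $X_j$ having $k_j$ outcomes). Stratified graphs. For an undirected graph $G=(\Delta,E)$ and an edge $\{\delta,\gamma\}\in E$, let $L_{\{\delta,\gamma\}}$ be the set of nodes adjacent to both $\delta$ and $\gamma$. A stratum of the edge is a set $\mathcal{L}_{\{\delta,\gamma\}}$ of outcomes $x_{L_{\{\delta,\gamma\}}}$ for which $X_\delta\perp X_\gamma\mid X_{L_{\{\delta,\gamma\}}}=x_{L_{\{\delta,\gamma\}}}$. A stratified graph (SG) $G_L$ is a pair $(G,L)$, where $L$ is the collection of strata attached to edges of $G$. It is decomposable if $G$ is decomposable (chordal), no stratified edge lies in a separator of $G$, and within each clique $C$ all stratified edges share at least one common node. Factor formula. For a clique $C$ (or separator $S$) with $d$ variables, order them $X_1,\dots,X_d$, where, if $C$ contains stratified edges, $X_d$ is a node common to all of them. For $j<d$, and for $j=d$ when there are no strata, the parent outcomes (outcomes of $X_1,\dots,X_{j-1}$) are each their own group. For $j=d$ with strata, the outcomes of $X_1,\dots,X_{d-1}$ are partitioned into $q_d$ groups: each outcome $x$ in the stratum of an edge $\{d',d\}$ merges the two parent outcomes that agree with $x$ on the common neighbours and differ only in $X_{d'}$, and groups are the resulting equivalence classes. Let $q_j$ be the number of groups for $X_j$. For a data matrix $\mathbf{Y}$ on the variables of $C$, let $n(\pi_j^l)$ be the number of rows whose parent outcome lies in group $l$, and $n(x_j^i\mid\pi_j^l)$ the number of those rows in which $X_j=i$. For positive hyperparameters $\beta_{jil}$,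 \[ P_C(\mathbf{Y})=\prod_{j=1}^{d}\prod_{l=1}^{q_j}\frac{\Gamma(\sum_{i=1}^{k_j}\beta_{jil})}{\Gamma(n(\pi_j^l)+\sum_{i=1}^{k_j}\beta_{jil})}\prod_{i=1}^{k_j}\frac{\Gamma(n(x_j^i\mid\pi_j^l)+\beta_{jil})}{\Gamma(\beta_{jil})}, \] and analogously for $P_S$. Predictive scores. Training data $\mathbf{X}^R$ consist of $m$ observations with class labels $R$, and $\mathbf{X}^{R,k}$ denotes the training data of class $k$. In the posterior predictive version $P_C(\cdot\mid \mathbf{X}^{R,k})$ one uses $\beta_{jil}=\alpha_{jil}+m(x_j^i\mid\pi_j^l)$, where $\alpha_{jil}>0$ are fixed prior hyperparameters and $m(x_j^i\mid\pi_j^l)$ is the corresponding count in $\mathbf{X}^{R,k}$. Write $G_L^A=(G_L^1,\dots,G_L^K)$. Let $\mathbf{X}_i^T$ be the $i$-th test observation, and $\mathbf{X}^{T,k}$ the test observations assigned to class $k$ by $T$. Subscripts $C$ and $S$ denote restriction to the variables in $C$ or $S$. Then \[ P_{\mathrm{mar}}(T\mid\cdot)=\prod_{i=1}^n\frac{\prod_{C\in\mathcal{C}(G_L^{T(i)})}P_C(\mathbf{X}^T_{i,C}\mid \mathbf{X}^{R,T(i)})}{\prod_{S\in\mathcal{S}(G_L^{T(i)})}P_S(\mathbf{X}^T_{i,S}\mid \mathbf{X}^{R,T(i)})},\qquad P_{\mathrm{sim}}(T\mid\cdot)=\prod_{k=1}^K\frac{\prod_{C\in\mathcal{C}(G_L^{k})}P_C(\mathbf{X}^{T,k}_{C}\mid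 \mathbf{X}^{R,k})}{\prod_{S\in\mathcal{S}(G_L^{k})}P_S(\mathbf{X}^{T,k}_{S}\mid \mathbf{X}^{R,k})}. \] The marginal, respectively simultaneous, classifier chooses the $T$ maximizing $P_{\mathrm{mar}}$, respectively $P_{\mathrm{sim}}$. *)

From Stdlib Require Import Reals List Arith.
Import ListNotations.
Open Scope R_scope.

(** Observations: an observation assigns to each feature (indexed by nat) an
    outcome in {0,..,card v - 1}; [card v] is the number of outcomes k_v. *)
Definition obs := nat -> nat.

Fixpoint prodR (n : nat) (f : nat -> R) : R :=
  match n with O => 1 | S m => prodR m f * f m end.
Definition sumR (n : nat) (f : nat -> R) : R :=
  fold_right Rplus 0 (map f (seq 0 n)).
Definition prodL {A} (l : list A) (f : A -> R) : R :=
  fold_right (fun a r => f a * r) 1 l.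

(** Rising factorial: rf b n = b (b+1) ... (b+n-1) = Gamma(b+n)/Gamma(b). *)
Fixpoint rf (b : R) (n : nat) : R :=
  match n with O => 1 | S m => rf b m * (b + INR m) end.

(** Factor structure of a clique or separator C with d variables X_1..X_d
    (ordered as in the paper, [fvars] lists the feature indices in that order;
    position j = 0..d-1 is X_{j+1}).  For position j, [fq j] is the number of
    groups q_j, and [fgrp j pa] is the group (in 0..q_j-1) of the parent
    outcome pa = (x_1,..,x_{j-1}).  [falpha j i l] are the prior
    hyperparameters alpha_{jil}. *)
Record factor := mkFactor {
  fvars : list nat;
  fq : nat -> nat;
  fgrp : nat -> list nat -> nat;
  falpha : nat -> nat -> nat -> R
}.

Definition fvar (F : factor) (j : nat) : nat := nth j (fvars F) 0%nat.
Definition parents (F : factor) (j : nat) (x : obs) : list nat :=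
  map x (firstn j (fvars F)).
Definition in_group (F : factor) (j l : nat) (x : obs) : bool :=
  Nat.eqb (fgrp F j (parents F j x)) l.

Definition cnt_group (F : factor) (j l : nat) (Y : list obs) : nat :=
  length (filter (in_group F j l) Y).
Definition cnt (F : factor) (j i l : nat) (Y : list obs) : nat :=
  length (filter (fun x => andb (in_group F j l x) (Nat.eqb (x (fvar F j)) i)) Y).

(** Posterior predictive factor P_C(Y | Xtrain), with
    beta_{jil} = alpha_{jil} + m(x_j^i | pi_j^l) computed from Xtrain.
    Gamma ratios with integer shifts are written as rising factorials. *)
Definition beta (card : nat -> nat) (F : factor) (Xtr : list obs) (j i l : nat) : R :=
  falpha F j i l + INR (cnt F j i l Xtr).

Definition Pfactor (card : nat -> nat) (F : factor) (Xtr Y : list obs) : R :=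
  prodR (length (fvars F)) (fun j =>
   let kj := card (fvar F j) in
   prodR (fq F j) (fun l =>
     prodR kj (fun i => rf (beta card F Xtr j i l) (cnt F j i l Y))
     / rf (sumR kj (fun i => beta card F Xtr j i l)) (cnt_group F j l Y))).

Definition Pgraph (card : nat -> nat) (cl sp : list factor) (Xtr Y : list obs) : R :=
  prodL cl (fun C => Pfactor card C Xtr Y) / prodL sp (fun S => Pfactor card S Xtr Y).

(** Test data: observations test 0, ..., test (n-1); labeling T (classes 0..K-1).
    Training data of class k: Xtr k.  cliques k / seps k: factor structures of
    the cliques and separators of G_L^k. *)
Definition Pmar (card : nat -> nat) (cliques seps : nat -> list factor)
  (Xtr : nat -> list obs) (n : nat) (test : nat -> obs) (T : nat -> nat) : R :=
  prodR n (fun i => Pgraph card (cliques (T i)) (seps (T i)) (Xtr (T i)) [test i]).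

Definition test_class (n : nat) (test : nat -> obs) (T : nat -> nat) (k : nat) : list obs :=
  map test (filter (fun i => Nat.eqb (T i) k) (seq 0 n)).

Definition Psim (card : nat -> nat) (cliques seps : nat -> list factor)
  (Xtr : nat -> list obs) (K n : nat) (test : nat -> obs) (T : nat -> nat) : R :=
  prodR K (fun k => Pgraph card (cliques k) (seps k) (Xtr k) (test_class n test T k)).

(** The key object is the "plug-in" factor [Pplug]: it is [Pfactor] with every
    rising factorial [rf b m] replaced by the power [b ^ m].  Two facts drive
    the proof.
    - Exactness on single rows and multiplicativity: a single test row has all
      counts in {0,1}, where [rf b m = b ^ m], so [Pfactor] and [Pplug] agree on
      it; and [Pplug] is exactly multiplicative over the rows of a data set.
      Regrouping the product over test rows by class, [Pmar] is therefore the
      product over the classes of the plug-in graph scores of the test data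
      assigned to each class.
    - Asymptotic agreement: [rf b m / b ^ m -> 1] as [b -> oo], and every
      hyperparameter [beta] (and every sum of them) tends to infinity with the
      training counts; hence [Pfactor / Pplug -> 1] for every clique and
      separator of every class. *)

From Stdlib Require Import Reals List Arith Lia Lra.
Import ListNotations.
Open Scope R_scope.

Lemma prodR_ext m f g :
  (forall j, (j < m)%nat -> f j = g j) -> prodR m f = prodR m g.
Proof.
  induction m as [|m IH]; intros Hfg; simpl; [reflexivity|].
  rewrite IH, Hfg; auto; intros; apply Hfg; lia.
Qed.

Lemma prodR_one m : prodR m (fun _ => 1) = 1.
Proof. induction m as [|m IH]; simpl; [reflexivity|rewrite IH; ring]. Qed.

Lemma prodR_mul m f g : prodR m (fun j => f j * g j) = prodR m f * prodR m g.
Proof. induction m as [|m IH]; simpl; [ring|rewrite IH; ring]. Qed.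

Lemma prodR_div m f g : prodR m f / prodR m g = prodR m (fun j => f j / g j).
Proof.
  induction m as [|m IH]; simpl; [field|].
  rewrite <- IH; unfold Rdiv; rewrite !Rinv_mult; ring.
Qed.

Lemma prodR_pos m f : (forall j, (j < m)%nat -> 0 < f j) -> 0 < prodR m f.
Proof.
  induction m as [|m IH]; intros Hf; simpl; [lra|].
  apply Rmult_lt_0_compat; [apply IH; intros|]; apply Hf; lia.
Qed.

Lemma prodR_delta K a (g : nat -> R) :
  (a < K)%nat -> prodR K (fun k => if Nat.eqb a k then g k else 1) = g a.
Proof.
  induction K as [|K IH]; intros Ha; simpl; [lia|].
  destruct (Nat.eq_dec a K) as [->|Hne].
  - rewrite Nat.eqb_refl, (prodR_ext K _ (fun _ => 1)), prodR_one; [ring|].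
    intros j Hj; destruct (Nat.eqb_spec K j); [lia|reflexivity].
  - rewrite IH by lia; destruct (Nat.eqb_spec a K); [lia|ring].
Qed.

Lemma prodL_ext {A} (l : list A) f g :
  (forall a, In a l -> f a = g a) -> prodL l f = prodL l g.
Proof.
  induction l as [|a l IH]; intros Hfg; simpl; [reflexivity|].
  rewrite IH, Hfg; simpl; auto; intros; apply Hfg; simpl; auto.
Qed.

Lemma prodL_mul {A} (l : list A) f g :
  prodL l (fun a => f a * g a) = prodL l f * prodL l g.
Proof. induction l as [|a l IH]; simpl; [ring|rewrite IH; ring]. Qed.

Lemma prodL_div {A} (l : list A) f g :
  prodL l f / prodL l g = prodL l (fun a => f a / g a).
Proof.
  induction l as [|a l IH]; simpl; [field|].
  rewrite <- IH; unfold Rdiv; rewrite !Rinv_mult; ring.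
Qed.

Lemma prodL_app {A} (l1 l2 : list A) f :
  prodL (l1 ++ l2) f = prodL l1 f * prodL l2 f.
Proof. induction l1 as [|a l IH]; simpl; [ring|rewrite IH; ring]. Qed.

Lemma prodL_map {A B} (g : A -> B) l f :
  prodL (map g l) f = prodL l (fun a => f (g a)).
Proof. induction l as [|a l IH]; simpl; [reflexivity|rewrite IH; reflexivity]. Qed.

Lemma prodL_swap {A B} (l1 : list A) (l2 : list B) (f : A -> B -> R) :
  prodL l1 (fun a => prodL l2 (f a)) = prodL l2 (fun b => prodL l1 (fun a => f a b)).
Proof.
  induction l1 as [|a l1 IH]; simpl.
  - induction l2 as [|b l2 IH2]; simpl; [reflexivity|rewrite <- IH2; ring].
  - rewrite IH, <- prodL_mul; reflexivity.
Qed.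

Lemma prodL_pos {A} (l : list A) f : (forall a, In a l -> 0 < f a) -> 0 < prodL l f.
Proof.
  induction l as [|a l IH]; intros Hf; simpl; [lra|].
  apply Rmult_lt_0_compat; [|apply IH; intros]; apply Hf; simpl; auto.
Qed.

Lemma prodR_by_class (h : nat -> nat -> R) (T : nat -> nat) K n :
  (forall i, (i < n)%nat -> (T i < K)%nat) ->
  prodR n (fun i => h (T i) i) =
  prodR K (fun k => prodL (filter (fun i => Nat.eqb (T i) k) (seq 0 n)) (h k)).
Proof.
  induction n as [|n IH]; intros HT; cbn [prodR].
  - symmetry; apply prodR_one.
  - rewrite IH, <- (prodR_delta K (T n) (fun k => h k n)), <- prodR_mul
      by (try apply HT; intros; try apply HT; lia).
    apply prodR_ext; intros k _.
    rewrite seq_S, filter_app, prodL_app; simpl.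
    destruct (Nat.eqb (T n) k); simpl; ring.
Qed.

Lemma sumR_S m f : sumR (S m) f = sumR m f + f m.
Proof.
  unfold sumR; rewrite seq_S, map_app, fold_right_app; simpl.
  generalize (map f (seq 0 m)); intros l.
  induction l as [|a l IH]; simpl; [ring|rewrite IH; ring].
Qed.

Lemma sumR_nonneg m f : (forall i, (i < m)%nat -> 0 <= f i) -> 0 <= sumR m f.
Proof.
  induction m as [|m IH]; intros Hf; [unfold sumR; simpl; lra|].
  rewrite sumR_S; assert (0 <= sumR m f) by (apply IH; intros; apply Hf; lia).
  assert (0 <= f m) by (apply Hf; lia); lra.
Qed.

Lemma sumR_ge_last m f :
  (forall i, (i <= m)%nat -> 0 <= f i) -> f m <= sumR (S m) f.
Proof.
  intros Hf; rewrite sumR_S.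
  assert (0 <= sumR m f) by (apply sumR_nonneg; intros; apply Hf; lia); lra.
Qed.

Lemma Un_cv_ext (u v : nat -> R) l :
  (forall N, u N = v N) -> Un_cv u l -> Un_cv v l.
Proof.
  intros Huv Hu e He; destruct (Hu e He) as [M HM].
  exists M; intros N HN; rewrite <- Huv; auto.
Qed.

Lemma Un_cv_eventually_ext (u v : nat -> R) l :
  (exists N0, forall N, (N >= N0)%nat -> u N = v N) -> Un_cv u l -> Un_cv v l.
Proof.
  intros [N0 Huv] Hu e He; destruct (Hu e He) as [M HM].
  exists (max M N0); intros N HN; rewrite <- Huv by lia; apply HM; lia.
Qed.

Lemma Un_cv_const c : Un_cv (fun _ => c) c.
Proof. intros e He; exists O; intros; unfold Rdist; rewrite Rminus_diag, Rabs_R0; lra. Qed.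

Lemma cv_mult1 (a b : nat -> R) :
  Un_cv a 1 -> Un_cv b 1 -> Un_cv (fun N => a N * b N) 1.
Proof. intros; replace 1 with (1 * 1) by ring; apply CV_mult; auto. Qed.

Lemma cv_div1 (a b : nat -> R) :
  Un_cv a 1 -> Un_cv b 1 -> Un_cv (fun N => a N / b N) 1.
Proof.
  intros Ha Hb; apply cv_mult1; [exact Ha|].
  assert (Hinv : continuity_pt (/ id) 1).
  { apply continuity_pt_inv; [apply derivable_continuous_pt, derivable_pt_id|].
    unfold id; lra. }
  pose proof (continuity_seq _ _ _ Hinv Hb) as H; unfold inv_fct, id in H.
  rewrite Rinv_1 in H; exact H.
Qed.

Lemma cv_ln1 (a : nat -> R) : Un_cv a 1 -> Un_cv (fun N => ln (a N)) 0.
Proof.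
  intros Ha; rewrite <- ln_1; apply continuity_seq; [|exact Ha].
  apply derivable_continuous_pt; exists (/ 1); apply derivable_pt_lim_ln; lra.
Qed.

Lemma ln_sub a b : 0 < a -> 0 < b -> ln a - ln b = ln (a / b).
Proof.
  intros Ha Hb; unfold Rdiv.
  rewrite ln_mult, ln_Rinv by (auto; apply Rinv_0_lt_compat; auto); ring.
Qed.

Lemma prodR_cv (f : nat -> nat -> R) m :
  (forall j, (j < m)%nat -> Un_cv (fun N => f N j) 1) ->
  Un_cv (fun N => prodR m (f N)) 1.
Proof.
  induction m as [|m IH]; intros Hf; simpl; [apply Un_cv_const|].
  apply cv_mult1; [apply IH; intros|]; apply Hf; lia.
Qed.

Lemma prodL_cv {A} (f : nat -> A -> R) l :
  (forall a, In a l -> Un_cv (fun N => f N a) 1) ->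
  Un_cv (fun N => prodL l (f N)) 1.
Proof.
  induction l as [|a l IH]; intros Hf; simpl; [apply Un_cv_const|].
  apply cv_mult1; [|apply IH; intros]; apply Hf; simpl; auto.
Qed.

Lemma cv_infty_le (u v : nat -> R) :
  cv_infty u -> (forall N, u N <= v N) -> cv_infty v.
Proof.
  intros Hu Huv M; destruct (Hu M) as [N0 HN0].
  exists N0; intros N HN; specialize (HN0 N HN); specialize (Huv N); lra.
Qed.

Lemma cv_shift_ratio (b : nat -> R) c :
  cv_infty b -> Un_cv (fun N => (b N + c) / b N) 1.
Proof.
  intros Hb; apply (Un_cv_eventually_ext (fun N => 1 + c * / b N)).
  - destruct (Hb 0) as [N0 HN0]; exists N0; intros N HN.
    specialize (HN0 N HN); field; lra.
  - assert (Hlim : Un_cv (fun N => 1 + c * / b N) (1 + c * 0)).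
    { apply CV_plus; [apply Un_cv_const|].
      apply CV_mult; [apply Un_cv_const|apply cv_infty_cv_0, Hb]. }
    rewrite Rmult_0_r, Rplus_0_r in Hlim; exact Hlim.
Qed.

Lemma rf_over_pow b m : rf b m / b ^ m = prodR m (fun t => (b + INR t) / b).
Proof.
  induction m as [|m IH]; simpl; [field|].
  rewrite <- IH; unfold Rdiv; rewrite Rinv_mult; ring.
Qed.

Lemma rf_over_pow_cv (b : nat -> R) m :
  cv_infty b -> Un_cv (fun N => rf (b N) m / b N ^ m) 1.
Proof.
  intros Hb; apply (Un_cv_ext (fun N => prodR m (fun t => (b N + INR t) / b N))).
  - intros; symmetry; apply rf_over_pow.
  - apply (prodR_cv (fun N t => (b N + INR t) / b N)); intros.
    apply cv_shift_ratio, Hb.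
Qed.

Lemma rf_pos b m : 0 < b -> 0 < rf b m.
Proof.
  intros Hb; induction m as [|m IH]; simpl; [lra|].
  apply Rmult_lt_0_compat; [exact IH|]; pose proof (pos_INR m); lra.
Qed.

Lemma rf_le1 b m : (m <= 1)%nat -> rf b m = b ^ m.
Proof. intros Hm; destruct m as [|[|m]]; simpl; try lia; ring. Qed.

Definition Pplug (card : nat -> nat) (F : factor) (Xtr Y : list obs) : R :=
  prodR (length (fvars F)) (fun j =>
   let kj := card (fvar F j) in
   prodR (fq F j) (fun l =>
     prodR kj (fun i => beta card F Xtr j i l ^ cnt F j i l Y)
     / sumR kj (fun i => beta card F Xtr j i l) ^ cnt_group F j l Y)).

Lemma cnt_cons F j i l x Y :
  cnt F j i l (x :: Y) = (cnt F j i l [x] + cnt F j i l Y)%nat.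
Proof. unfold cnt; simpl; destruct (andb _ _); reflexivity. Qed.

Lemma cnt_group_cons F j l x Y :
  cnt_group F j l (x :: Y) = (cnt_group F j l [x] + cnt_group F j l Y)%nat.
Proof. unfold cnt_group; simpl; destruct (in_group _ _ _ _); reflexivity. Qed.

Lemma cnt_single F j i l x : (cnt F j i l [x] <= 1)%nat.
Proof. unfold cnt; simpl; destruct (andb _ _); simpl; lia. Qed.

Lemma cnt_group_single F j l x : (cnt_group F j l [x] <= 1)%nat.
Proof. unfold cnt_group; simpl; destruct (in_group _ _ _ _); simpl; lia. Qed.

Lemma Pfactor_single card F Xtr x : Pfactor card F Xtr [x] = Pplug card F Xtr [x].
Proof.
  unfold Pfactor, Pplug; apply prodR_ext; intros j _; apply prodR_ext; intros l _.
  rewrite rf_le1 by apply cnt_group_single; f_equal.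
  apply prodR_ext; intros i _; apply rf_le1, cnt_single.
Qed.

Lemma Pplug_nil card F Xtr : Pplug card F Xtr [] = 1.
Proof.
  unfold Pplug; rewrite <- (prodR_one (length (fvars F))); apply prodR_ext; intros j _.
  rewrite <- (prodR_one (fq F j)); apply prodR_ext; intros l _.
  simpl; rewrite prodR_one; field.
Qed.

Lemma Pplug_cons card F Xtr x Y :
  Pplug card F Xtr (x :: Y) = Pplug card F Xtr [x] * Pplug card F Xtr Y.
Proof.
  unfold Pplug; rewrite <- prodR_mul; apply prodR_ext; intros j _.
  rewrite <- prodR_mul; apply prodR_ext; intros l _.
  rewrite cnt_group_cons, pow_add,
    (prodR_ext _ _ (fun i => beta card F Xtr j i l ^ cnt F j i l [x] *
                             beta card F Xtr j i l ^ cnt F j i l Y)),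
    prodR_mul by (intros; rewrite cnt_cons, pow_add; reflexivity).
  unfold Rdiv; rewrite Rinv_mult; ring.
Qed.

Lemma Pplug_rows card F Xtr Y :
  Pplug card F Xtr Y = prodL Y (fun x => Pplug card F Xtr [x]).
Proof.
  induction Y as [|x Y IH]; simpl; [apply Pplug_nil|].
  rewrite Pplug_cons, IH; reflexivity.
Qed.

Definition forall_cells (card : nat -> nat) (F : factor) (P : nat -> nat -> nat -> Prop) : Prop :=
  forall j i l, (j < length (fvars F))%nat -> (i < card (fvar F j))%nat ->
    (l < fq F j)%nat -> P j i l.

Lemma beta_pos card F Xtr j i l : 0 < falpha F j i l -> 0 < beta card F Xtr j i l.
Proof. unfold beta; pose proof (pos_INR (cnt F j i l Xtr)); lra. Qed.

Lemma beta_sum_ge card F Xtr j l :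
  (1 <= card (fvar F j))%nat ->
  (forall i, (i < card (fvar F j))%nat -> 0 < falpha F j i l) ->
  let kj := card (fvar F j) in
  beta card F Xtr j (pred kj) l <= sumR kj (fun i => beta card F Xtr j i l).
Proof.
  intros Hc Ha kj; unfold kj; destruct (card (fvar F j)) as [|m] eqn:E; [lia|].
  apply (sumR_ge_last m (fun i => beta card F Xtr j i l)); intros i Hi.
  apply Rlt_le, beta_pos, Ha; lia.
Qed.

Lemma Pfactor_pos card F Xtr Y :
  (forall v, (1 <= card v)%nat) ->
  forall_cells card F (fun j i l => 0 < falpha F j i l) ->
  0 < Pfactor card F Xtr Y.
Proof.
  intros Hc Ha; unfold Pfactor; apply prodR_pos; intros j Hj.
  apply prodR_pos; intros l Hl.
  apply Rdiv_lt_0_compat; [apply prodR_pos; intros i Hi; apply rf_pos, beta_pos, Ha; auto|].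
  apply rf_pos.
  assert (Hlast : (pred (card (fvar F j)) < card (fvar F j))%nat)
    by (specialize (Hc (fvar F j)); lia).
  pose proof (beta_sum_ge card F Xtr j l (Hc _) (fun i Hi => Ha j i l Hj Hi Hl)) as Hge.
  pose proof (beta_pos card F Xtr j _ l (Ha j _ l Hj Hlast Hl)); simpl in Hge; lra.
Qed.

Lemma Pfactor_over_Pplug card F Xtr Y :
  Pfactor card F Xtr Y / Pplug card F Xtr Y =
  prodR (length (fvars F)) (fun j => prodR (fq F j) (fun l =>
    let kj := card (fvar F j) in
    let B := sumR kj (fun i => beta card F Xtr j i l) in
    prodR kj (fun i => rf (beta card F Xtr j i l) (cnt F j i l Y) /
                       beta card F Xtr j i l ^ cnt F j i l Y) /
    (rf B (cnt_group F j l Y) / B ^ cnt_group F j l Y))).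
Proof.
  unfold Pfactor, Pplug; rewrite prodR_div; apply prodR_ext; intros j _.
  rewrite prodR_div; apply prodR_ext; intros l _; simpl; rewrite <- prodR_div.
  unfold Rdiv; rewrite !Rinv_mult, !Rinv_inv; ring.
Qed.

Lemma Pfactor_over_Pplug_cv card F (train : nat -> list obs) Y :
  (forall v, (1 <= card v)%nat) ->
  forall_cells card F (fun j i l => 0 < falpha F j i l) ->
  forall_cells card F (fun j i l => cv_infty (fun N => INR (cnt F j i l (train N)))) ->
  Un_cv (fun N => Pfactor card F (train N) Y / Pplug card F (train N) Y) 1.
Proof.
  intros Hc Ha Hcv.
  eapply Un_cv_ext; [intros N; symmetry; apply Pfactor_over_Pplug|].
  apply (prodR_cv (fun N j => _)); intros j Hj.
  apply (prodR_cv (fun N l => _)); intros l Hl; simpl.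
  assert (Hbeta : forall i, (i < card (fvar F j))%nat ->
                    cv_infty (fun N => beta card F (train N) j i l)).
  { intros i Hi; apply (cv_infty_le _ _ (Hcv j i l Hj Hi Hl)); intros N.
    unfold beta; pose proof (Ha j i l Hj Hi Hl); lra. }
  apply cv_div1.
  - apply (prodR_cv (fun N i => _)); intros i Hi.
    apply (rf_over_pow_cv (fun N => beta card F (train N) j i l)), Hbeta, Hi.
  - apply (rf_over_pow_cv (fun N => sumR _ (fun i => beta card F (train N) j i l))).
    specialize (Hc (fvar F j)).
    apply (cv_infty_le _ _ (Hbeta (pred (card (fvar F j))) ltac:(lia))); intros N.
    apply (beta_sum_ge card F (train N) j l Hc (fun i Hi => Ha j i l Hj Hi Hl)).
Qed.

Definition Pplug_graph card (cl sp : list factor) Xtr Y : R :=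
  prodL cl (fun C => Pplug card C Xtr Y) / prodL sp (fun S => Pplug card S Xtr Y).

Lemma Pgraph_single card cl sp Xtr x :
  Pgraph card cl sp Xtr [x] = Pplug_graph card cl sp Xtr [x].
Proof.
  unfold Pgraph, Pplug_graph.
  rewrite !(prodL_ext _ (fun S => Pfactor card S Xtr [x]) (fun S => Pplug card S Xtr [x]))
    by (intros; apply Pfactor_single).
  reflexivity.
Qed.

Lemma Pplug_graph_rows card cl sp Xtr Y :
  Pplug_graph card cl sp Xtr Y = prodL Y (fun x => Pplug_graph card cl sp Xtr [x]).
Proof.
  unfold Pplug_graph.
  rewrite (prodL_ext cl _ (fun C => prodL Y (fun x => Pplug card C Xtr [x])))
    by (intros; apply Pplug_rows).
  rewrite (prodL_ext sp _ (fun S => prodL Y (fun x => Pplug card S Xtr [x])))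
    by (intros; apply Pplug_rows).
  rewrite !(prodL_swap _ Y); apply prodL_div.
Qed.

Lemma Pgraph_over_plug card cl sp Xtr Y :
  Pgraph card cl sp Xtr Y / Pplug_graph card cl sp Xtr Y =
  prodL cl (fun C => Pfactor card C Xtr Y / Pplug card C Xtr Y) /
  prodL sp (fun S => Pfactor card S Xtr Y / Pplug card S Xtr Y).
Proof.
  unfold Pgraph, Pplug_graph; rewrite <- !prodL_div; unfold Rdiv.
  rewrite !Rinv_mult, !Rinv_inv; ring.
Qed.

Lemma Pmar_plug card cliques seps Xtr K n test T :
  (forall i, (i < n)%nat -> (T i < K)%nat) ->
  Pmar card cliques seps Xtr n test T =
  prodR K (fun k => Pplug_graph card (cliques k) (seps k) (Xtr k) (test_class n test T k)).
Proof.
  intros HT; unfold Pmar.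
  set (h := fun k i => Pplug_graph card (cliques k) (seps k) (Xtr k) [test i]).
  rewrite (prodR_ext n _ (fun i => h (T i) i)) by (intros; apply Pgraph_single).
  rewrite (prodR_by_class h T K n HT); apply prodR_ext; intros k _.
  unfold test_class; rewrite Pplug_graph_rows, prodL_map; reflexivity.
Qed.

Lemma Pgraph_over_plug_cv card cl sp (train : nat -> list obs) Y :
  (forall v, (1 <= card v)%nat) ->
  (forall F, In F (cl ++ sp) -> forall_cells card F (fun j i l => 0 < falpha F j i l)) ->
  (forall F, In F (cl ++ sp) ->
     forall_cells card F (fun j i l => cv_infty (fun N => INR (cnt F j i l (train N))))) ->
  Un_cv (fun N => Pgraph card cl sp (train N) Y / Pplug_graph card cl sp (train N) Y) 1.
Proof.
  intros Hc Ha Hcv.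
  eapply Un_cv_ext; [intros N; symmetry; apply Pgraph_over_plug|].
  apply cv_div1; apply (prodL_cv (fun N F => _)); intros F HF;
    apply Pfactor_over_Pplug_cv; auto;
    [apply Ha|apply Hcv|apply Ha|apply Hcv]; apply in_or_app; auto.
Qed.

Lemma Pgraph_pos card cl sp Xtr Y :
  (forall v, (1 <= card v)%nat) ->
  (forall F, In F (cl ++ sp) -> forall_cells card F (fun j i l => 0 < falpha F j i l)) ->
  0 < Pgraph card cl sp Xtr Y.
Proof.
  intros Hc Ha; unfold Pgraph.
  apply Rdiv_lt_0_compat; apply prodL_pos; intros F HF;
    apply Pfactor_pos; auto; apply Ha, in_or_app; auto.
Qed.

Theorem theorem1
  (card : nat -> nat) (K : nat) (cliques seps : nat -> list factor)
  (n : nat) (test : nat -> obs) (T : nat -> nat)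
  (train : nat -> nat -> list obs) :
  (1 <= K)%nat ->
  (forall v, (1 <= card v)%nat) ->
  (forall i, (i < n)%nat -> (T i < K)%nat) ->
  (forall i v, (i < n)%nat -> (test i v < card v)%nat) ->
  (forall N k x v, In x (train N k) -> (x v < card v)%nat) ->
  (forall k F, (k < K)%nat -> In F (cliques k ++ seps k) ->
     forall j i l, (j < length (fvars F))%nat -> (i < card (fvar F j))%nat ->
       (l < fq F j)%nat -> 0 < falpha F j i l) ->
  (forall k F, (k < K)%nat -> In F (cliques k ++ seps k) ->
     forall j i l, (j < length (fvars F))%nat -> (i < card (fvar F j))%nat ->
       (l < fq F j)%nat ->
       cv_infty (fun N => INR (cnt F j i l (train N k)))) ->
  Un_cv (fun N => ln (Psim card cliques seps (train N) K n test T)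
                  - ln (Pmar card cliques seps (train N) n test T)) 0.
Proof.
  intros _ Hc HT _ _ Ha Hcv.
  set (Y k := test_class n test T k).
  assert (Hpos : forall k Xtr Z, (k < K)%nat -> 0 < Pgraph card (cliques k) (seps k) Xtr Z)
    by (intros k Xtr Z Hk; apply Pgraph_pos; [exact Hc|intros F HF; exact (Ha k F Hk HF)]).
  (* The log-difference is the log of [Psim / Pmar], a product of per-class
     ratios of predictive to plug-in graph scores. *)
  apply (Un_cv_ext (fun N => ln (prodR K (fun k =>
      Pgraph card (cliques k) (seps k) (train N k) (Y k) /
      Pplug_graph card (cliques k) (seps k) (train N k) (Y k))))).
  { intros N; rewrite ln_sub by (apply prodR_pos; intros; apply Hpos; auto).
    rewrite (Pmar_plug _ _ _ _ _ _ _ _ HT); unfold Psim, Y; rewrite prodR_div; reflexivity. }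
  apply cv_ln1, (prodR_cv (fun N k => _)); intros k Hk.
  apply Pgraph_over_plug_cv; [exact Hc|intros F HF; exact (Ha k F Hk HF)|].
  intros F HF; exact (Hcv k F Hk HF).
Qed.
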